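(* Let $\Delta>0$, $L>0$ and $\epsilon\in[0,L)$ (in the paper's normalization $L=1$, this is $\epsilon\in[0,1)$). Let $\mathcal{A}$ be any (deterministic or randomized) algorithm which, at each iteration $t$, chooses a query point $x_t$ as a (possibly random) function of the previously queried points and the oracle answers received so far, and receives as answer the function value $f(x_t)$ and an element of the generalized gradient $\partial f(x_t)$. Then for every finite $T$ there exists $f\in\mathcal{F}(\Delta,L)$ such that, when $\mathcal{A}$ is run on $f$, the probability that the sequence $\{x_t\}_{t=1}^T$ contains an $\epsilon$-stationary point of $f$ is at most $\tfrac12$.
   Context: Clarke generalized gradient: $f^\circ(x;d):=\limsup_{y\to x,\,t\downarrow0}\frac{f(y+td)-f(y)}{t}$ and $\partial f(x):=\{g:\langle g,d\rangle\le f^\circ(x;d)\ \forall d\}$. A point $x$ is $\epsilon$-stationary if $\min\{\|g\|:g\in\partial f(x)\}\le\epsilon$. $f$ is directionally differentiable (Hadamard) if for all $x,d$ and all $\varphi:\mathbb{R}_+\to\mathbb{R}^n$ with $\varphi(0)=x$, $\lim_{t\to0^+}(\varphi(t)-\varphi(0))/t=d$, the limit $f'(x;d)=\lim_{t\to0^+}(f(\varphi(t))-f(x))/t$ exists. Given a fixed initial point $x_0$, $\mathcal{F}(\Delta,L)$ is the set of $f:\mathbb{R}^n\to\mathbb{R}$ that are $L$-Lipschitz, directionally differentiable at every point, and satisfy $f(x_0)-\inf_x f(x)\le\Delta$. *)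

From Stdlib Require Fin.
From Stdlib Require Import Reals Lra List.
Open Scope R_scope.

Definition Vec (n : nat) : Type := Fin.t n -> R.

Fixpoint fsum (n : nat) : (Fin.t n -> R) -> R :=
  match n return (Fin.t n -> R) -> R with
  | O => fun _ => 0
  | S m => fun v => v Fin.F1 + fsum m (fun i => v (Fin.FS i))
  end.

Definition vadd {n} (x y : Vec n) : Vec n := fun i => x i + y i.
Definition vsub {n} (x y : Vec n) : Vec n := fun i => x i - y i.
Definition vscale {n} (a : R) (x : Vec n) : Vec n := fun i => a * x i.
Definition inner {n} (x y : Vec n) : R := fsum n (fun i => x i * y i).
Definition norm {n} (x : Vec n) : R := sqrt (inner x x).

(* r = limsup_{y -> x, t -> 0+} (f(y + t d) - f(y)) / t  (as a real number) *)
Definition clarke_dd {n} (f : Vec n -> R) (x d : Vec n) (r : R) : Prop :=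
  (forall e, 0 < e -> exists delta, 0 < delta /\
     forall (y : Vec n) (t : R), norm (vsub y x) < delta -> 0 < t < delta ->
       (f (vadd y (vscale t d)) - f y) / t <= r + e) /\
  (forall e delta, 0 < e -> 0 < delta -> exists (y : Vec n) (t : R),
       norm (vsub y x) < delta /\ 0 < t < delta /\
       r - e < (f (vadd y (vscale t d)) - f y) / t).

Definition clarke_subgrad {n} (f : Vec n -> R) (x g : Vec n) : Prop :=
  forall (d : Vec n) (r : R), clarke_dd f x d r -> inner g d <= r.

Definition eps_stationary {n} (f : Vec n -> R) (eps : R) (x : Vec n) : Prop :=
  exists g, clarke_subgrad f x g /\ norm g <= eps.

Definition lipschitz {n} (L : R) (f : Vec n -> R) : Prop :=
  forall x y : Vec n, Rabs (f x - f y) <= L * norm (vsub x y).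

Definition hadamard_dir_diff {n} (f : Vec n -> R) : Prop :=
  forall (x d : Vec n) (phi : R -> Vec n),
    phi 0 = x ->
    (forall e, 0 < e -> exists delta, 0 < delta /\ forall t, 0 < t < delta ->
        norm (vsub (vscale (/ t) (vsub (phi t) (phi 0))) d) < e) ->
    exists l, forall e, 0 < e -> exists delta, 0 < delta /\ forall t, 0 < t < delta ->
        Rabs ((f (phi t) - f x) / t - l) < e.

Definition in_class {n} (x0 : Vec n) (Delta L : R) (f : Vec n -> R) : Prop :=
  lipschitz L f /\ hadamard_dir_diff f /\ (forall x, f x0 - f x <= Delta).

Record ProbSpace (Omega : Type) := {
  meas : (Omega -> Prop) -> Prop;
  meas_full : meas (fun _ => True);
  meas_compl : forall A, meas A -> meas (fun w => ~ A w);
  meas_union : forall A : nat -> Omega -> Prop,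
      (forall k, meas (A k)) -> meas (fun w => exists k, A k w);
  prob : (Omega -> Prop) -> R;
  prob_nonneg : forall A, meas A -> 0 <= prob A;
  prob_full : prob (fun _ => True) = 1;
  prob_sigma_add : forall A : nat -> Omega -> Prop,
      (forall k, meas (A k)) ->
      (forall i j w, i <> j -> A i w -> A j w -> False) ->
      infinite_sum (fun k => prob (A k)) (prob (fun w => exists k, A k w))
}.
Arguments meas {Omega} _ _.
Arguments prob {Omega} _ _.

Definition history (n : nat) : Type := list (Vec n * R * Vec n).

Definition algorithm (n : nat) (Omega : Type) : Type := Omega -> history n -> Vec n.

Definition valid_oracle {n} (f : Vec n -> R) (O : Vec n -> Vec n) : Prop :=
  forall x, clarke_subgrad f x (O x).

Fixpoint run {n} (a : history n -> Vec n) (f : Vec n -> R) (O : Vec n -> Vec n)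
    (t : nat) : history n :=
  match t with
  | O => nil
  | S t' => let h := run a f O t' in let x := a h in h ++ ((x, f x, O x) :: nil)
  end.

(* the (t+1)-th query point x_{t+1} *)
Definition query {n} (a : history n -> Vec n) f O (t : nat) : Vec n := a (run a f O t).

Definition finds_stationary {n Omega} (A : algorithm n Omega) (f : Vec n -> R)
    (O : Vec n -> Vec n) (eps : R) (T : nat) : Omega -> Prop :=
  fun w => exists t, (t < T)%nat /\ eps_stationary f eps (query (A w) f O t).

From Stdlib Require Import Reals Lra Lia List Psatz.
From Stdlib Require Import Classical ClassicalEpsilon FunctionalExtensionality PropExtensionality.
Open Scope R_scope.

(* Each candidate f_j depends only on the first coordinate X, through a piecewise linear
   profile with slope -s up to c_j, slope -L down to its only stationary point p_j, and
   slope L afterwards with value L X - K, independent of j.  Where a candidate is affine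
   its Clarke gradient is a singleton, so a query left of c_j (resp. right of p_j) gets the
   same non-stationary answer from every such candidate.  The intervals [c_j, p_j] are
   disjoint, so a query singles out at most one candidate and otherwise branches two ways:
   T deterministic queries catch at most 2^T - 1 of 2^(T+1) candidates, and averaging over
   the random seed some candidate is caught with probability at most 1/2. *)

Lemma fsum_ext n (u v : Fin.t n -> R) : (forall i, u i = v i) -> fsum n u = fsum n v.
Proof.
  induction n; simpl; intros H; [reflexivity|].
  rewrite H, (IHn (fun i => u (Fin.FS i)) (fun i => v (Fin.FS i))); auto.
Qed.

Lemma fsum_zero n : fsum n (fun _ => 0) = 0.
Proof. induction n; simpl; [reflexivity|]. rewrite IHn; ring. Qed.

Lemma fsum_sub n (u v : Fin.t n -> R) : fsum n (fun i => u i - v i) = fsum n u - fsum n v.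
Proof.
  induction n; simpl; [ring|].
  rewrite (IHn (fun i => u (Fin.FS i)) (fun i => v (Fin.FS i))). ring.
Qed.

Lemma fsum_scal n a (v : Fin.t n -> R) : fsum n (fun i => a * v i) = a * fsum n v.
Proof. induction n; simpl; [ring|]. rewrite (IHn (fun i => v (Fin.FS i))). ring. Qed.

Lemma fsum_nonneg n (v : Fin.t n -> R) : (forall i, 0 <= v i) -> 0 <= fsum n v.
Proof.
  induction n; simpl; intros H; [lra|].
  pose proof (H Fin.F1). pose proof (IHn (fun i => v (Fin.FS i)) (fun i => H _)). lra.
Qed.

Lemma fsum_eq0 n (v : Fin.t n -> R) :
  (forall i, 0 <= v i) -> fsum n v = 0 -> forall i, v i = 0.
Proof.
  induction n; intros Hv Hsum i; [inversion i|].
  simpl in Hsum. pose proof (Hv Fin.F1).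
  pose proof (fsum_nonneg n (fun i => v (Fin.FS i)) (fun i => Hv _)).
  apply (Fin.caseS' i (fun i => v i = 0)); [lra|].
  intro k. apply (IHn (fun i => v (Fin.FS i))); auto. lra.
Qed.

Lemma inner_comm n (v w : Vec n) : inner v w = inner w v.
Proof. apply fsum_ext. intro; ring. Qed.

Lemma inner_vsub_l n (u v w : Vec n) : inner (vsub u v) w = inner u w - inner v w.
Proof.
  unfold inner, vsub. rewrite <- fsum_sub. apply fsum_ext. intro; ring.
Qed.

Lemma inner_vscale_r n a (v w : Vec n) : inner v (vscale a w) = a * inner v w.
Proof.
  unfold inner, vscale. rewrite <- fsum_scal. apply fsum_ext. intro; ring.
Qed.

Lemma vec_eq_of_inner n (v w : Vec n) : (forall d, inner v d = inner w d) -> v = w.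
Proof.
  intros H. set (u := vsub v w).
  assert (Huu : fsum n (fun i => u i * u i) = 0).
  { change (inner u u = 0). unfold u at 1. rewrite inner_vsub_l, H. ring. }
  apply functional_extensionality. intro i.
  pose proof (fsum_eq0 n _ (fun i => Rle_0_sqr (u i)) Huu i) as Hi.
  cbv beta in Hi. apply Rmult_integral in Hi. unfold u, vsub in Hi. lra.
Qed.

Definition e1 {m} : Vec (S m) := fun i => match i with Fin.F1 => 1 | Fin.FS _ => 0 end.

Lemma inner_e1_l m a (d : Vec (S m)) : inner (vscale a e1) d = a * d Fin.F1.
Proof.
  unfold inner, vscale. simpl. rewrite (fsum_ext _ _ (fun _ => 0)), fsum_zero.
  - ring.
  - intros; simpl; ring.
Qed.

Lemma coord_le_norm m (v : Vec (S m)) : Rabs (v Fin.F1) <= norm v.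
Proof.
  unfold norm, inner. simpl. rewrite <- sqrt_Rsqr_abs. apply sqrt_le_1_alt.
  pose proof (fsum_nonneg m (fun i => v (Fin.FS i) * v (Fin.FS i)) (fun i => ltac:(nra))).
  unfold Rsqr. lra.
Qed.

Lemma norm_shift_e1 m (x : Vec (S m)) u : norm (vsub (vadd x (vscale u e1)) x) = Rabs u.
Proof.
  unfold norm, inner, vsub, vadd, vscale. simpl.
  rewrite (fsum_ext _ _ (fun _ => 0)), fsum_zero, <- sqrt_Rsqr_abs.
  - f_equal. unfold Rsqr. ring.
  - intros; simpl; ring.
Qed.

Definition two_slope (a b h : R) : R := b * Rmax h 0 + a * Rmin h 0.

Definition locally_two_slope (g : R -> R) (X a b : R) : Prop :=
  exists del, 0 < del /\ forall h, Rabs h < del -> g (X + h) = g X + two_slope a b h.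

Lemma two_slope_homog a b t h : 0 < t -> two_slope a b (t * h) = t * two_slope a b h.
Proof.
  intros Ht. unfold two_slope, Rmax, Rmin.
  destruct (Rle_dec (t * h) 0), (Rle_dec h 0); nra.
Qed.

Lemma two_slope_lipschitz a b z w :
  Rabs (two_slope a b z - two_slope a b w) <= (Rabs a + Rabs b) * Rabs (z - w).
Proof.
  unfold two_slope, Rmax, Rmin.
  destruct (Rle_dec z 0), (Rle_dec w 0); split_Rabs; nra.
Qed.

Lemma two_slope_step_le a b h t d : 0 <= t ->
  two_slope a b (h + t * d) - two_slope a b h <= t * Rmax (a * d) (b * d).
Proof.
  intros Ht.
  assert (Ha : t * (a * d) <= t * Rmax (a * d) (b * d))
    by (apply Rmult_le_compat_l; [lra | apply Rmax_l]).
  assert (Hb : t * (b * d) <= t * Rmax (a * d) (b * d))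
    by (apply Rmult_le_compat_l; [lra | apply Rmax_r]).
  set (M := Rmax (a * d) (b * d)) in *. unfold two_slope, Rmax, Rmin.
  destruct (Rle_dec (h + t * d) 0), (Rle_dec h 0), (Rle_dec a b); nra.
Qed.

Lemma two_slope_step_left a b h t d : h <= 0 -> h + t * d <= 0 ->
  two_slope a b (h + t * d) - two_slope a b h = t * (a * d).
Proof.
  intros. unfold two_slope. rewrite !Rmax_right, !Rmin_left by lra. ring.
Qed.

Lemma two_slope_step_right a b h t d : 0 <= h -> 0 <= h + t * d ->
  two_slope a b (h + t * d) - two_slope a b h = t * (b * d).
Proof.
  intros. unfold two_slope. rewrite !Rmax_left, !Rmin_right by lra. ring.
Qed.

Lemma locally_two_slope_of_sides g X a b del : 0 < del ->
  (forall h, - del < h <= 0 -> g (X + h) = g X + a * h) ->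
  (forall h, 0 <= h < del -> g (X + h) = g X + b * h) ->
  locally_two_slope g X a b.
Proof.
  intros Hdel Hl Hr. exists del. split; [exact Hdel|]. intros h Hh.
  unfold two_slope. destruct (Rle_dec h 0).
  - rewrite Rmax_right, Rmin_left, Hl by (split_Rabs; lra). ring.
  - rewrite Rmax_left, Rmin_right, Hr by (split_Rabs; lra). ring.
Qed.

Definition lift1 {m} (x0 : Vec (S m)) (g : R -> R) (x : Vec (S m)) : R :=
  g (x Fin.F1 - x0 Fin.F1).

Section Lift.
Variables (m : nat) (x0 : Vec (S m)) (g : R -> R).

Lemma lift1_lipschitz L : (forall Y Z, Rabs (g Y - g Z) <= L * Rabs (Y - Z)) -> 0 <= L ->
  lipschitz L (lift1 x0 g).
Proof.
  intros Hg HL x y. unfold lift1. eapply Rle_trans; [apply Hg|].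
  apply Rmult_le_compat_l; [exact HL|].
  replace (x Fin.F1 - x0 Fin.F1 - (y Fin.F1 - x0 Fin.F1)) with (vsub x y Fin.F1)
    by (unfold vsub; ring).
  apply coord_le_norm.
Qed.

Lemma lift1_quotient (x y d : Vec (S m)) (a b del t : R) :
  (forall h, Rabs h < del -> g (x Fin.F1 - x0 Fin.F1 + h) =
     g (x Fin.F1 - x0 Fin.F1) + two_slope a b h) ->
  Rabs (y Fin.F1 - x Fin.F1) < del -> Rabs (y Fin.F1 - x Fin.F1 + t * d Fin.F1) < del ->
  lift1 x0 g (vadd y (vscale t d)) - lift1 x0 g y =
  two_slope a b (y Fin.F1 - x Fin.F1 + t * d Fin.F1) - two_slope a b (y Fin.F1 - x Fin.F1).
Proof.
  intros Hg H1 H2. unfold lift1, vadd, vscale.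
  replace (y Fin.F1 + t * d Fin.F1 - x0 Fin.F1)
    with (x Fin.F1 - x0 Fin.F1 + (y Fin.F1 - x Fin.F1 + t * d Fin.F1)) by ring.
  replace (y Fin.F1 - x0 Fin.F1) with (x Fin.F1 - x0 Fin.F1 + (y Fin.F1 - x Fin.F1)) by ring.
  rewrite (Hg _ H1), (Hg _ H2). ring.
Qed.

(* Near a two-slope point every difference quotient lies below the larger of the
   directional slopes, and points on the side of that slope attain it. *)
Lemma clarke_dd_lift1_upper x a b d : locally_two_slope g (x Fin.F1 - x0 Fin.F1) a b ->
  forall e, 0 < e -> exists delta, 0 < delta /\
    forall (y : Vec (S m)) (t : R), norm (vsub y x) < delta -> 0 < t < delta ->
      (lift1 x0 g (vadd y (vscale t d)) - lift1 x0 g y) / t <=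
      Rmax (a * d Fin.F1) (b * d Fin.F1) + e.
Proof.
  intros [del [Hdel Hg]] e He. set (D := Rabs (d Fin.F1)). assert (HD : 0 <= D) by apply Rabs_pos.
  set (del' := del / (2 + 2 * D)). exists del'.
  assert (Hdel' : del' * (2 + 2 * D) = del) by (unfold del'; field; lra).
  split; [nra|]. intros y t Hy Ht.
  pose proof (coord_le_norm m (vsub y x)) as Hc. unfold vsub at 1 in Hc.
  assert (H1 : Rabs (y Fin.F1 - x Fin.F1) < del) by nra.
  assert (H2 : Rabs (y Fin.F1 - x Fin.F1 + t * d Fin.F1) < del).
  { eapply Rle_lt_trans; [apply Rabs_triang|].
    rewrite Rabs_mult, (Rabs_right t) by lra. fold D. nra. }
  rewrite (lift1_quotient x y d a b del t) by assumption.
  pose proof (two_slope_step_le a b (y Fin.F1 - x Fin.F1) t (d Fin.F1) ltac:(lra)) as Hstep.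
  assert (Hdiv : forall A M, A <= t * M -> A / t <= M).
  { intros A M HA. apply (Rmult_le_reg_r t); [lra|]. unfold Rdiv.
    rewrite Rmult_assoc, Rinv_l by lra. lra. }
  apply Hdiv in Hstep. lra.
Qed.

Lemma clarke_dd_lift1_lower x a b d : locally_two_slope g (x Fin.F1 - x0 Fin.F1) a b ->
  forall e delta, 0 < e -> 0 < delta -> exists (y : Vec (S m)) (t : R),
    norm (vsub y x) < delta /\ 0 < t < delta /\
    Rmax (a * d Fin.F1) (b * d Fin.F1) - e < (lift1 x0 g (vadd y (vscale t d)) - lift1 x0 g y) / t.
Proof.
  intros [del [Hdel Hg]] e del0 He Hdel0.
  set (d1 := d Fin.F1). set (D := Rabs d1). assert (HD : 0 <= D) by apply Rabs_pos.
  set (eta := Rmin del del0 / 2). set (t := eta / (2 * (D + 1))).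
  pose proof (Rmin_l del del0). pose proof (Rmin_r del del0).
  assert (Heta : 0 < eta) by (pose proof (Rmin_glb_lt del del0 0 Hdel Hdel0); unfold eta; lra).
  assert (Heta2 : eta <= del / 2 /\ eta <= del0 / 2) by (unfold eta; lra).
  assert (Ht : t * (2 * (D + 1)) = eta) by (unfold t; field; lra).
  assert (Ht0 : 0 < t < del0) by nra.
  assert (Htd : - (eta / 2) <= t * d1 <= eta / 2).
  { assert (Habs : Rabs (t * d1) <= eta / 2)
      by (rewrite Rabs_mult, Rabs_right by lra; fold D; nra).
    revert Habs. split_Rabs; lra. }
  (* probe from [x + u e1], on the side where the larger slope lives *)
  assert (Hside : forall u, Rabs u = eta -> exists y, norm (vsub y x) < del0 /\
      lift1 x0 g (vadd y (vscale t d)) - lift1 x0 g y = two_slope a b (u + t * d1) - two_slope a b u).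
  { intros u Hu. set (y := vadd x (vscale u e1)).
    assert (Hy1 : y Fin.F1 - x Fin.F1 = u) by (unfold y, vadd, vscale, e1; simpl; ring).
    exists y. split; [unfold y; rewrite norm_shift_e1; lra|].
    rewrite (lift1_quotient x y d a b del t), Hy1; [reflexivity | exact Hg | rewrite Hy1; lra |].
    rewrite Hy1. fold d1. revert Hu. split_Rabs; lra. }
  assert (Hdiv : forall A, (t * A) / t = A) by (intro; field; lra).
  destruct (Rle_dec (b * d1) (a * d1)) as [Hab|Hab].
  - destruct (Hside (- eta)) as [y [Hy Hq]]; [rewrite Rabs_Ropp, Rabs_right; lra|].
    exists y, t. split; [exact Hy|]. split; [exact Ht0|].
    rewrite Hq, two_slope_step_left, Hdiv, Rmax_left by lra. lra.
  - destruct (Hside eta) as [y [Hy Hq]]; [rewrite Rabs_right; lra|].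
    exists y, t. split; [exact Hy|]. split; [exact Ht0|].
    rewrite Hq, two_slope_step_right, Hdiv, Rmax_right by lra. lra.
Qed.

Lemma clarke_dd_lift1 x a b d : locally_two_slope g (x Fin.F1 - x0 Fin.F1) a b ->
  clarke_dd (lift1 x0 g) x d (Rmax (a * d Fin.F1) (b * d Fin.F1)).
Proof.
  intros Hloc. split; [apply clarke_dd_lift1_upper | apply clarke_dd_lift1_lower]; exact Hloc.
Qed.

Lemma coord_quotient_cvg (x d : Vec (S m)) (phi : R -> Vec (S m)) : phi 0 = x ->
  (forall e, 0 < e -> exists delta, 0 < delta /\ forall t, 0 < t < delta ->
     norm (vsub (vscale (/ t) (vsub (phi t) (phi 0))) d) < e) ->
  forall e, 0 < e -> exists delta, 0 < delta /\ forall t, 0 < t < delta ->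
     Rabs (/ t * (phi t Fin.F1 - x Fin.F1) - d Fin.F1) < e.
Proof.
  intros Hphi0 Hconv e He. destruct (Hconv e He) as [delta [Hdelta Hcv]].
  exists delta. split; [exact Hdelta|]. intros t Ht.
  eapply Rle_lt_trans; [|exact (Hcv t Ht)].
  rewrite <- Hphi0. apply (coord_le_norm m (vsub (vscale (/ t) (vsub (phi t) (phi 0))) d)).
Qed.

Lemma hadamard_lift1 : (forall X, exists a b, locally_two_slope g X a b) ->
  hadamard_dir_diff (lift1 x0 g).
Proof.
  intros Hg x d phi Hphi0 Hconv. set (X := x Fin.F1 - x0 Fin.F1). set (d1 := d Fin.F1).
  destruct (Hg X) as [a [b [del [Hdel Hloc]]]].
  exists (two_slope a b d1). intros e He.
  set (C := Rabs a + Rabs b + 1).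
  assert (HC : 1 <= C) by (unfold C; pose proof (Rabs_pos a); pose proof (Rabs_pos b); lra).
  set (e' := Rmin 1 (e / C)).
  assert (He' : 0 < e') by (apply Rmin_glb_lt; [lra | apply Rdiv_lt_0_compat; lra]).
  assert (He'C : C * e' <= e).
  { apply Rle_trans with (C * (e / C)); [apply Rmult_le_compat_l; [lra | apply Rmin_r]|].
    right. field. lra. }
  pose proof (Rmin_l 1 (e / C)) as He'1. fold e' in He'1.
  destruct (coord_quotient_cvg x d phi Hphi0 Hconv e' He') as [del1 [Hdel1 Hcv]].
  set (D := Rabs d1 + 2). assert (HD : 2 <= D) by (unfold D; pose proof (Rabs_pos d1); lra).
  exists (Rmin del1 (del / D)).
  split; [apply Rmin_glb_lt; [lra | apply Rdiv_lt_0_compat; lra]|].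
  intros t Ht. pose proof (Rmin_l del1 (del / D)). pose proof (Rmin_r del1 (del / D)).
  set (z := / t * (phi t Fin.F1 - x Fin.F1)).
  assert (Hz : Rabs (z - d1) < e') by (apply Hcv; lra).
  assert (Htz : Rabs (t * z) < del).
  { assert (Hzd : Rabs z < D) by (unfold D; split_Rabs; lra).
    rewrite Rabs_mult, Rabs_right by lra.
    apply Rle_lt_trans with (del / D * Rabs z); [apply Rmult_le_compat_r; [apply Rabs_pos | lra]|].
    apply Rlt_le_trans with (del / D * D); [apply Rmult_lt_compat_l; [apply Rdiv_lt_0_compat|]; lra|].
    right. field. lra. }
  unfold lift1. fold X.
  replace (phi t Fin.F1 - x0 Fin.F1) with (X + t * z) by (unfold X, z; field; lra).
  rewrite (Hloc _ Htz), two_slope_homog by lra.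
  replace ((g X + t * two_slope a b z - g X) / t) with (two_slope a b z) by (field; lra).
  eapply Rle_lt_trans; [apply two_slope_lipschitz|].
  apply Rle_lt_trans with (C * Rabs (z - d1)); [apply Rmult_le_compat_r; [apply Rabs_pos | unfold C; lra]|].
  apply Rlt_le_trans with (C * e'); [apply Rmult_lt_compat_l; lra | exact He'C].
Qed.

Lemma clarke_subgrad_lift1_affine x a v :
  locally_two_slope g (x Fin.F1 - x0 Fin.F1) a a ->
  clarke_subgrad (lift1 x0 g) x v -> v = vscale a e1.
Proof.
  intros Hloc Hv. apply vec_eq_of_inner. intro d. rewrite inner_e1_l.
  assert (Hdd : forall d, inner v d <= a * d Fin.F1).
  { intro d'. apply Hv.
    replace (a * d' Fin.F1) with (Rmax (a * d' Fin.F1) (a * d' Fin.F1)) by (apply Rmax_left; lra).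
    apply clarke_dd_lift1, Hloc. }
  pose proof (Hdd d) as Hle. pose proof (Hdd (vscale (-1) d)) as Hge.
  rewrite inner_vscale_r in Hge. unfold vscale in Hge. lra.
Qed.

End Lift.

Lemma not_eps_stationary_of_dd m (f : Vec (S m) -> R) x sigma r eps :
  Rabs sigma = 1 -> clarke_dd f x (vscale sigma e1) r -> r < - eps -> ~ eps_stationary f eps x.
Proof.
  intros Hsigma Hdd Hr [v [Hv Hnorm]]. pose proof (Hv _ _ Hdd) as Hvd.
  rewrite inner_comm, inner_e1_l in Hvd. pose proof (coord_le_norm m v).
  assert (Habs : Rabs (sigma * v Fin.F1) = Rabs (v Fin.F1)) by (rewrite Rabs_mult, Hsigma; ring).
  revert Habs. split_Rabs; lra.
Qed.

Lemma Rmax_dist_le a b a' b' M :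
  Rabs (a - a') <= M -> Rabs (b - b') <= M -> Rabs (Rmax a b - Rmax a' b') <= M.
Proof. unfold Rmax. destruct (Rle_dec a b), (Rle_dec a' b'); split_Rabs; lra. Qed.

Lemma Rmin_dist_le a b a' b' M :
  Rabs (a - a') <= M -> Rabs (b - b') <= M -> Rabs (Rmin a b - Rmin a' b') <= M.
Proof. unfold Rmin. destruct (Rle_dec a b), (Rle_dec a' b'); split_Rabs; lra. Qed.

(* Slope [-s] up to [c], slope [-L] from [c] to the minimiser [profile_argmin], slope [L]
   after it; the last piece [L Y - K] does not depend on [c]. *)
Definition profile (s L K c Y : R) : R :=
  Rmax (Rmin (- s * Y) (- s * c - L * (Y - c))) (L * Y - K).

Definition profile_argmin (s L K c : R) : R := (K + (L - s) * c) / (2 * L).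

Section Profile.
Variables s L K c : R.
Hypothesis Hs : 0 < s.
Hypothesis HsL : s < L.
Hypothesis Hc : 0 <= c.
Hypothesis HcK : (L + s) * c < K.

Local Notation g := (profile s L K c).
Local Notation p := (profile_argmin s L K c).

Lemma profile_argmin_eq : 2 * L * p = K + (L - s) * c.
Proof. unfold profile_argmin. field. lra. Qed.

Lemma lt_profile_argmin : c < p.
Proof. pose proof profile_argmin_eq. nra. Qed.

Lemma profile_left Y : Y <= c -> g Y = - s * Y.
Proof.
  intros HY. pose proof profile_argmin_eq. unfold profile, Rmax, Rmin.
  destruct (Rle_dec (- s * Y) (- s * c - L * (Y - c))); [|nra].
  destruct (Rle_dec (- s * Y) (L * Y - K)); nra.
Qed.

Lemma profile_mid Y : c <= Y <= p -> g Y = - s * c - L * (Y - c).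
Proof.
  intros HY. pose proof profile_argmin_eq. unfold profile, Rmax, Rmin.
  destruct (Rle_dec (- s * Y) (- s * c - L * (Y - c))).
  - assert (Y = c) by nra. subst. destruct (Rle_dec (- s * c) (L * c - K)); nra.
  - destruct (Rle_dec (- s * c - L * (Y - c)) (L * Y - K)); nra.
Qed.

Lemma profile_right Y : p <= Y -> g Y = L * Y - K.
Proof.
  intros HY. pose proof profile_argmin_eq. pose proof lt_profile_argmin. unfold profile, Rmax, Rmin.
  destruct (Rle_dec (- s * Y) (- s * c - L * (Y - c))).
  - destruct (Rle_dec (- s * Y) (L * Y - K)); nra.
  - destruct (Rle_dec (- s * c - L * (Y - c)) (L * Y - K)); nra.
Qed.

Lemma profile_zero : g 0 = 0.
Proof. rewrite profile_left by lra. ring. Qed.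

Lemma profile_ge Y : - K <= g Y.
Proof.
  pose proof profile_argmin_eq. pose proof lt_profile_argmin.
  destruct (Rle_dec Y c); [rewrite profile_left by lra; nra|].
  destruct (Rle_dec Y p); [rewrite profile_mid by lra; nra|].
  rewrite profile_right by lra. nra.
Qed.

Lemma profile_lipschitz Y Z : Rabs (g Y - g Z) <= L * Rabs (Y - Z).
Proof.
  pose proof (Rabs_pos (Y - Z)).
  unfold profile. apply Rmax_dist_le; [apply Rmin_dist_le|].
  - replace (- s * Y - - s * Z) with (- s * (Y - Z)) by ring.
    rewrite Rabs_mult, Rabs_Ropp, (Rabs_right s) by lra. nra.
  - replace (- s * c - L * (Y - c) - (- s * c - L * (Z - c))) with (- L * (Y - Z)) by ring.
    rewrite Rabs_mult, Rabs_Ropp, (Rabs_right L) by lra. lra.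
  - replace (L * Y - K - (L * Z - K)) with (L * (Y - Z)) by ring.
    rewrite Rabs_mult, (Rabs_right L) by lra. lra.
Qed.

Lemma profile_slopes_left X : X < c -> locally_two_slope g X (- s) (- s).
Proof.
  intros HX. apply (locally_two_slope_of_sides _ _ _ _ (c - X)); [lra| |];
    intros h Hh; rewrite !profile_left by lra; ring.
Qed.

Lemma profile_slopes_at_c : locally_two_slope g c (- s) (- L).
Proof.
  pose proof lt_profile_argmin.
  apply (locally_two_slope_of_sides _ _ _ _ (p - c)); [lra| |]; intros h Hh.
  - rewrite !profile_left by lra. ring.
  - rewrite profile_mid, profile_left by lra. ring.
Qed.

Lemma profile_slopes_mid X : c < X < p -> locally_two_slope g X (- L) (- L).
Proof.
  intros HX. pose proof (Rmin_l (X - c) (p - X)). pose proof (Rmin_r (X - c) (p - X)).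
  apply (locally_two_slope_of_sides _ _ _ _ (Rmin (X - c) (p - X))); [apply Rmin_glb_lt; lra| |];
    intros h Hh; rewrite !profile_mid by lra; ring.
Qed.

Lemma profile_slopes_at_argmin : locally_two_slope g p (- L) L.
Proof.
  pose proof lt_profile_argmin. pose proof profile_argmin_eq.
  apply (locally_two_slope_of_sides _ _ _ _ (p - c)); [lra| |]; intros h Hh.
  - rewrite !profile_mid by lra. ring.
  - rewrite !profile_right by lra. ring.
Qed.

Lemma profile_slopes_right X : p < X -> locally_two_slope g X L L.
Proof.
  intros HX. apply (locally_two_slope_of_sides _ _ _ _ (X - p)); [lra| |];
    intros h Hh; rewrite !profile_right by lra; ring.
Qed.

Lemma profile_piecewise X : exists a b, locally_two_slope g X a b.
Proof.
  pose proof lt_profile_argmin.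
  destruct (Rtotal_order X c) as [H1 | [-> | H1]].
  - eauto using profile_slopes_left.
  - eauto using profile_slopes_at_c.
  - destruct (Rtotal_order X p) as [H2 | [-> | H2]].
    + eauto using profile_slopes_mid.
    + eauto using profile_slopes_at_argmin.
    + eauto using profile_slopes_right.
Qed.

(* The Clarke derivative in direction [sigma] is at most [-s]: [sigma = 1] left of the
   minimiser (the kink at [c] is concave), [sigma = -1] right of it. *)
Lemma profile_descent X : X <> p ->
  exists a b sigma, locally_two_slope g X a b /\ Rabs sigma = 1 /\ Rmax (a * sigma) (b * sigma) <= - s.
Proof.
  intros Hp. pose proof lt_profile_argmin.
  assert (R1 : Rabs 1 = 1) by (apply Rabs_R1).
  assert (Rm1 : Rabs (-1) = 1) by (rewrite Rabs_left; lra).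
  destruct (Rtotal_order X c) as [H1 | [-> | H1]].
  - exists (- s), (- s), 1. rewrite Rmax_left by lra.
    repeat split; [apply profile_slopes_left; lra | exact R1 | lra].
  - exists (- s), (- L), 1. rewrite Rmax_left by lra.
    repeat split; [apply profile_slopes_at_c | exact R1 | lra].
  - destruct (Rtotal_order X p) as [H2 | [H2 | H2]]; [|contradiction|].
    + exists (- L), (- L), 1. rewrite Rmax_left by lra.
      repeat split; [apply profile_slopes_mid; lra | exact R1 | lra].
    + exists L, L, (-1). rewrite Rmax_left by lra.
      repeat split; [apply profile_slopes_right; lra | exact Rm1 | lra].
Qed.

End Profile.

Definition answer {n} (f : Vec n -> R) (O : Vec n -> Vec n) (x : Vec n) : Vec n * R * Vec n :=
  (x, f x, O x).

Definition succeeds {n} (a : history n -> Vec n) (f : Vec n -> R) (O : Vec n -> Vec n)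
    (eps : R) (T : nat) : Prop :=
  exists t, (t < T)%nat /\ eps_stationary f eps (query a f O t).

Definition answers_split {n} (f : nat -> Vec n -> R) (O : nat -> Vec n -> Vec n) (eps : R) :
    Prop :=
  forall x, exists (eL eR : Vec n * R * Vec n) (j0 : nat), forall j, j <> j0 ->
    (answer (f j) (O j) x = eL \/ answer (f j) (O j) x = eR) /\ ~ eps_stationary (f j) eps x.

Lemma run_S n (a : history n -> Vec n) f O t :
  run a f O (S t) = answer f O (a nil) :: run (fun h => a (answer f O (a nil) :: h)) f O t.
Proof.
  induction t; [reflexivity|].
  change (run a f O (S (S t))) with (run a f O (S t) ++ answer f O (a (run a f O (S t))) :: nil).
  rewrite IHt. reflexivity.
Qed.

Lemma succeeds_S n (a : history n -> Vec n) f O eps T e :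
  answer f O (a nil) = e -> ~ eps_stationary f eps (a nil) ->
  succeeds a f O eps (S T) -> succeeds (fun h => a (e :: h)) f O eps T.
Proof.
  intros <- Hx [[|t] [Ht Hst]]; [contradiction|].
  exists t. split; [lia|]. unfold query in *. rewrite run_S in Hst. exact Hst.
Qed.

Definition indR (P : Prop) : R := if excluded_middle_informative P then 1 else 0.

Fixpoint lsum (v : nat -> R) (l : list nat) : R :=
  match l with nil => 0 | j :: l' => v j + lsum v l' end.

Definition count (P : nat -> Prop) (l : list nat) : R := lsum (fun j => indR (P j)) l.

Lemma lsum_le (u v : nat -> R) l : (forall j, u j <= v j) -> lsum u l <= lsum v l.
Proof. intros H. induction l; simpl; [lra|]. pose proof (H a). lra. Qed.

Lemma lsum_add (u v : nat -> R) l : lsum (fun j => u j + v j) l = lsum u l + lsum v l.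
Proof. induction l; simpl; [ring|]. rewrite IHl. ring. Qed.

Lemma lsum_lower (v : nat -> R) c l :
  (forall j, In j l -> c <= v j) -> INR (length l) * c <= lsum v l.
Proof.
  induction l as [|j l IH]; intros H; cbn [lsum length]; [simpl; lra|].
  rewrite S_INR. pose proof (H j (or_introl eq_refl)).
  pose proof (IH (fun k Hk => H k (or_intror Hk))). lra.
Qed.

Lemma count_mono (P Q : nat -> Prop) l : (forall j, P j -> Q j) -> count P l <= count Q l.
Proof.
  intros H. apply lsum_le. intro j. unfold indR.
  destruct (excluded_middle_informative (P j)), (excluded_middle_informative (Q j));
    try lra; exfalso; auto.
Qed.

Lemma count_le_split3 (P Q1 Q2 Q3 : nat -> Prop) l :
  (forall j, P j -> Q1 j \/ Q2 j \/ Q3 j) -> count P l <= count Q1 l + count Q2 l + count Q3 l.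
Proof.
  intros H. unfold count. rewrite <- !lsum_add. apply lsum_le. intro j. unfold indR.
  destruct (excluded_middle_informative (P j)) as [HP|];
  destruct (excluded_middle_informative (Q1 j)); destruct (excluded_middle_informative (Q2 j));
  destruct (excluded_middle_informative (Q3 j)); try lra.
  destruct (H j HP) as [|[|]]; contradiction.
Qed.

Lemma count_false (P : nat -> Prop) l : (forall j, In j l -> ~ P j) -> count P l = 0.
Proof.
  intros H. unfold count. induction l as [|j l IH]; simpl; [reflexivity|].
  rewrite IH by (intros k Hk; apply H; right; exact Hk). unfold indR.
  destruct (excluded_middle_informative (P j)) as [HP|]; [|ring].
  exfalso. exact (H j (or_introl eq_refl) HP).
Qed.

Lemma count_eq_le1 j0 l : NoDup l -> count (fun j => j = j0) l <= 1.
Proof.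
  induction 1 as [|j l Hj Hl IH]; [unfold count; simpl; lra|].
  change (indR (j = j0) + count (fun j => j = j0) l <= 1). unfold indR.
  destruct (excluded_middle_informative (j = j0)) as [->|]; [|lra].
  rewrite count_false; [lra|]. intros k Hk ->. contradiction.
Qed.

Lemma count_succeeds_le n (f : nat -> Vec n -> R) O eps : answers_split f O eps ->
  forall T a (Sel : nat -> Prop) l, NoDup l ->
  count (fun j => Sel j /\ succeeds a (f j) (O j) eps T) l <= 2 ^ T - 1.
Proof.
  intros Hsplit T. induction T as [|T IH]; intros a Sel l Hl.
  - rewrite count_false; [simpl; lra|]. intros j _ [_ [t [Ht _]]]. lia.
  - destruct (Hsplit (a nil)) as [eL [eR [j0 Hj]]].
    set (branch e j := Sel j /\ answer (f j) (O j) (a nil) = e).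
    eapply Rle_trans; [apply (count_le_split3 _ (fun j => j = j0)
      (fun j => branch eL j /\ succeeds (fun h => a (eL :: h)) (f j) (O j) eps T)
      (fun j => branch eR j /\ succeeds (fun h => a (eR :: h)) (f j) (O j) eps T))|].
    + intros j [HSel Hsucc]. destruct (Nat.eq_dec j j0) as [|Hne]; [now left|right].
      destruct (Hj j Hne) as [[HL|HR] Hns]; [left|right];
        (split; [split; assumption | eapply succeeds_S; eassumption]).
    + pose proof (count_eq_le1 j0 l Hl).
      pose proof (IH (fun h => a (eL :: h)) (branch eL) l Hl).
      pose proof (IH (fun h => a (eR :: h)) (branch eR) l Hl).
      simpl. lra.
Qed.

(* [c_j = cmax (1 - q^j)] with [cmax = K / (L + s)]: since
   [cmax - profile_argmin c = (L - s) / (2 L) * (cmax - c)], the ratio [q = (L - s) / (4 L)]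
   puts each minimiser below all later kinks. *)
Lemma separated_kinks s L K : 0 < s < L -> 0 < K ->
  exists cs : nat -> R, (forall j, 0 <= cs j /\ (L + s) * cs j < K) /\
    (forall j j', (j < j')%nat -> profile_argmin s L K (cs j) < cs j').
Proof.
  intros [Hs HsL] HK. set (cmax := K / (L + s)). set (q := (L - s) / (4 * L)).
  assert (Hcmax : (L + s) * cmax = K) by (unfold cmax; field; lra).
  assert (Hq : 4 * L * q = L - s) by (unfold q; field; lra).
  assert (Hq0 : 0 < q < 1) by (split; nra).
  assert (Hpow : forall j, 0 < q ^ j <= 1).
  { intro j. split; [apply pow_lt; lra | rewrite <- (pow1 j); apply pow_incr; lra]. }
  exists (fun j => cmax * (1 - q ^ j)). split.
  - intro j. pose proof (Hpow j). split; nra.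
  - intros j j' Hjj'.
    assert (Hq' : q ^ j' <= q * q ^ j).
    { replace j' with (S j + (j' - S j))%nat by lia. rewrite pow_add. change (q ^ S j) with (q * q ^ j).
      pose proof (Hpow (j' - S j)%nat). pose proof (Hpow j).
      assert (0 < q * q ^ j) by nra. nra. }
    assert (HLc : 0 < L * cmax) by (unfold cmax; apply Rmult_lt_0_compat, Rdiv_lt_0_compat; lra).
    apply (Rmult_lt_reg_l (2 * L)); [lra|]. unfold profile_argmin. rewrite <- Hcmax.
    replace s with (L - 4 * L * q) by lra.
    replace (2 * L * (((L + (L - 4 * L * q)) * cmax + (L - (L - 4 * L * q)) * (cmax * (1 - q ^ j)))
      / (2 * L))) with (2 * (L * cmax) - 4 * (L * cmax) * (q * q ^ j)) by (field; lra).
    pose proof (Hpow j). assert (0 < q * q ^ j) by nra. nra.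
Qed.

Section HardFamily.
Variables (m : nat) (x0 : Vec (S m)) (s L K eps : R) (cs : nat -> R).
Hypothesis Hs : 0 < s.
Hypothesis HsL : s < L.
Hypothesis Heps : 0 <= eps < s.
Hypothesis Hcs : forall j, 0 <= cs j /\ (L + s) * cs j < K.
Hypothesis Hsep : forall j j', (j < j')%nat -> profile_argmin s L K (cs j) < cs j'.

Definition hard_fun (j : nat) : Vec (S m) -> R := lift1 x0 (profile s L K (cs j)).

Local Notation X x := (x Fin.F1 - x0 Fin.F1).
Local Notation p j := (profile_argmin s L K (cs j)).

Lemma hard_fun_in_class j : in_class x0 K L (hard_fun j).
Proof.
  destruct (Hcs j) as [Hc HcK]. split; [|split].
  - apply lift1_lipschitz; [intros; apply profile_lipschitz|]; lra.
  - apply hadamard_lift1. intro Y. apply profile_piecewise; assumption.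
  - intro x. unfold hard_fun, lift1. rewrite Rminus_diag, profile_zero by assumption.
    pose proof (profile_ge s L K (cs j) Hs HsL Hc HcK (X x)). lra.
Qed.

Lemma hard_fun_not_stationary j x : X x <> p j -> ~ eps_stationary (hard_fun j) eps x.
Proof.
  intros Hx. destruct (Hcs j) as [Hc HcK].
  destruct (profile_descent s L K (cs j) Hs HsL HcK (X x) Hx)
    as [a [b [sigma [Hloc [Hsigma Hr]]]]].
  apply (not_eps_stationary_of_dd m _ x sigma _ eps Hsigma (clarke_dd_lift1 _ _ _ _ _ _ _ Hloc)).
  unfold vscale, e1. rewrite !Rmult_1_r. lra.
Qed.

Lemma hard_answer_left j O x : valid_oracle (hard_fun j) O -> X x < cs j ->
  answer (hard_fun j) O x = (x, - s * X x, vscale (- s) e1).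
Proof.
  intros HO Hx. destruct (Hcs j) as [Hc HcK]. unfold answer. f_equal; [f_equal|].
  - unfold hard_fun, lift1. apply profile_left; lra.
  - apply (clarke_subgrad_lift1_affine m x0 (profile s L K (cs j)) x); [|apply HO].
    apply profile_slopes_left; assumption.
Qed.

Lemma hard_answer_right j O x : valid_oracle (hard_fun j) O -> p j < X x ->
  answer (hard_fun j) O x = (x, L * X x - K, vscale L e1).
Proof.
  intros HO Hx. destruct (Hcs j) as [Hc HcK]. unfold answer. f_equal; [f_equal|].
  - unfold hard_fun, lift1. apply profile_right; lra.
  - apply (clarke_subgrad_lift1_affine m x0 (profile s L K (cs j)) x); [|apply HO].
    apply profile_slopes_right; assumption.
Qed.

Lemma kink_intervals_disjoint j j' Y :
  cs j <= Y <= p j -> cs j' <= Y <= p j' -> j = j'.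
Proof.
  intros Hj Hj'. destruct (Nat.lt_total j j') as [H | [H | H]]; [| exact H |];
    pose proof (Hsep _ _ H); lra.
Qed.

Lemma hard_answers_split O : (forall j, valid_oracle (hard_fun j) (O j)) ->
  answers_split hard_fun O eps.
Proof.
  intros HO x. exists (x, - s * X x, vscale (- s) e1), (x, L * X x - K, vscale L e1).
  assert (Hj0 : exists j0, forall j, j <> j0 -> ~ (cs j <= X x <= p j)).
  { destruct (classic (exists j0, cs j0 <= X x <= p j0)) as [[j0 H0] | Hnone];
      [exists j0 | exists 0%nat]; intros j Hne Hin.
    - exact (Hne (kink_intervals_disjoint _ _ _ Hin H0)).
    - exact (Hnone (ex_intro _ j Hin)). }
  destruct Hj0 as [j0 Hj0]. exists j0. intros j Hne.
  destruct (Rlt_le_dec (X x) (cs j)) as [HL | HL];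
    [| destruct (Rlt_le_dec (p j) (X x)) as [HR | HR]; [| exfalso; exact (Hj0 j Hne (conj HL HR))]].
  all: destruct (Hcs j) as [Hc HcK]; pose proof (lt_profile_argmin s L K (cs j) Hs HsL HcK).
  all: split; [| apply hard_fun_not_stationary; lra].
  - left. apply hard_answer_left; auto.
  - right. apply hard_answer_right; auto.
Qed.

End HardFamily.

Lemma hard_family m (x0 : Vec (S m)) Delta L eps : 0 < Delta -> 0 < L -> 0 <= eps < L ->
  exists f : nat -> Vec (S m) -> R, (forall j, in_class x0 Delta L (f j)) /\
    forall O, (forall j, valid_oracle (f j) (O j)) -> answers_split f O eps.
Proof.
  intros HDelta HL Heps. set (s := (eps + L) / 2).
  destruct (separated_kinks s L Delta) as [cs [Hcs Hsep]]; [unfold s; lra | exact HDelta |].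
  exists (hard_fun m x0 s L Delta cs). split.
  - intro j. apply hard_fun_in_class; unfold s; auto; lra.
  - intros O HO. apply hard_answers_split; unfold s; auto; lra.
Qed.

Lemma pred_ext {T} (A B : T -> Prop) : (forall w, A w <-> B w) -> A = B.
Proof.
  intros H. apply functional_extensionality. intro w. apply propositional_extensionality. auto.
Qed.

Section Probability.
Variables (Omega : Type) (P : ProbSpace Omega).

Lemma meas_empty : meas P (fun _ => False).
Proof.
  replace (fun _ : Omega => False) with (fun w : Omega => ~ True) by (apply pred_ext; tauto).
  apply meas_compl, meas_full.
Qed.

Lemma meas_or A B : meas P A -> meas P B -> meas P (fun w => A w \/ B w).
Proof.
  intros HA HB. set (F k := match k with O => A | S _ => B end).
  replace (fun w => A w \/ B w) with (fun w => exists k, F k w).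
  - apply meas_union. intros [|k]; assumption.
  - apply pred_ext. intro w. split.
    + intros [[|k] H]; auto.
    + intros [H|H]; [exists O | exists 1%nat]; exact H.
Qed.

Lemma meas_and A B : meas P A -> meas P B -> meas P (fun w => A w /\ B w).
Proof.
  intros HA HB.
  replace (fun w => A w /\ B w) with (fun w => ~ (~ A w \/ ~ B w)).
  2:{ apply pred_ext. intro w. split; [intro H; split; apply NNPP; tauto | tauto]. }
  apply meas_compl, meas_or; apply meas_compl; assumption.
Qed.

Lemma prob_empty : prob P (fun _ => False) = 0.
Proof.
  pose proof (prob_sigma_add _ P (fun _ _ => False) (fun _ => meas_empty) (fun _ _ _ _ H _ => H))
    as Hsum.
  cbv beta in Hsum.
  replace (fun _ : Omega => exists _ : nat, False) with (fun _ : Omega => False) in Hsum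
    by (apply pred_ext; firstorder).
  set (c := prob P (fun _ => False)) in *.
  destruct (Req_dec c 0) as [|Hne]; [assumption|exfalso].
  destruct (Hsum (Rabs c) (Rabs_pos_lt c Hne)) as [N HN]. specialize (HN (S N) ltac:(lia)).
  assert (Hconst : forall k, sum_f_R0 (fun _ => c) k = INR (S k) * c).
  { induction k; [simpl; ring|]. rewrite tech5, IHk, (S_INR (S k)). ring. }
  unfold Rdist in HN. rewrite Hconst in HN.
  replace (INR (S (S N)) * c - c) with (INR (S N) * c) in HN by (rewrite (S_INR (S N)); ring).
  rewrite Rabs_mult, Rabs_right in HN by (apply Rle_ge, pos_INR).
  pose proof (pos_INR N). pose proof (Rabs_pos c). rewrite S_INR in HN. nra.
Qed.

Lemma prob_add A B : meas P A -> meas P B -> (forall w, A w -> B w -> False) ->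
  prob P (fun w => A w \/ B w) = prob P A + prob P B.
Proof.
  intros HA HB Hdisj.
  set (F k := match k with O => A | 1%nat => B | _ => fun _ : Omega => False end).
  assert (HF : forall k, meas P (F k)) by (intros [|[|k]]; simpl; auto using meas_empty).
  assert (HFdisj : forall i j w, i <> j -> F i w -> F j w -> False).
  { intros [|[|i]] [|[|j]] w Hij; simpl; intros; try tauto; try lia; eauto. }
  pose proof (prob_sigma_add _ P F HF HFdisj) as Hsum.
  replace (fun w => exists k, F k w) with (fun w => A w \/ B w) in Hsum.
  2:{ apply pred_ext. intro w. split.
      - intros [H|H]; [exists O | exists 1%nat]; exact H.
      - intros [[|[|k]] H]; simpl in H; auto; contradiction. }
  apply (uniqueness_sum (fun k => prob P (F k))); [exact Hsum|].
  intros e He. exists 1%nat. intros k Hk.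
  assert (Hpartial : sum_f_R0 (fun k => prob P (F k)) k = prob P A + prob P B).
  { induction k as [|k IH]; [lia|]. destruct k; [reflexivity|].
    rewrite tech5, IH by lia. simpl F. rewrite prob_empty. ring. }
  rewrite Hpartial. unfold Rdist. rewrite Rminus_diag, Rabs_R0. exact He.
Qed.

Lemma prob_split A B : meas P A -> meas P B ->
  prob P A = prob P (fun w => A w /\ B w) + prob P (fun w => A w /\ ~ B w).
Proof.
  intros HA HB. rewrite <- prob_add.
  - f_equal. apply pred_ext. intro w. tauto.
  - apply meas_and; assumption.
  - apply meas_and; [|apply meas_compl]; assumption.
  - tauto.
Qed.

(* A finite Fubini argument: split [G] according to whether [F j] holds and recurse. *)
Lemma sum_prob_le_of_count_le (F : nat -> Omega -> Prop) l : (forall j, meas P (F j)) ->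
  forall (G : Omega -> Prop) M, meas P G ->
  (forall w, G w -> count (fun j => F j w) l <= M) ->
  lsum (fun j => prob P (fun w => F j w /\ G w)) l <= M * prob P G.
Proof.
  intros HF. induction l as [|j l IH]; intros G M HG Hcount; simpl.
  - destruct (classic (exists w, G w)) as [[w Hw] | Hnone].
    + pose proof (Hcount w Hw). pose proof (prob_nonneg _ P G HG). unfold count in *. simpl in *. nra.
    + replace G with (fun _ : Omega => False) by (apply pred_ext; firstorder).
      rewrite prob_empty. lra.
  - set (G1 w := G w /\ F j w). set (G2 w := G w /\ ~ F j w).
    assert (HG1 : meas P G1) by (apply meas_and; auto).
    assert (HG2 : meas P G2) by (apply meas_and; [|apply meas_compl]; auto).
    assert (Hcount_j : forall w, G w -> indR (F j w) + count (fun i => F i w) l <= M)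
      by exact Hcount.
    assert (H1 : lsum (fun i => prob P (fun w => F i w /\ G1 w)) l <= (M - 1) * prob P G1).
    { apply IH; [exact HG1|]. intros w [Gw Fw]. pose proof (Hcount_j w Gw) as Hw.
      unfold indR in Hw. destruct (excluded_middle_informative (F j w)); [lra | contradiction]. }
    assert (H2 : lsum (fun i => prob P (fun w => F i w /\ G2 w)) l <= M * prob P G2).
    { apply IH; [exact HG2|]. intros w [Gw Fw]. pose proof (Hcount_j w Gw) as Hw.
      unfold indR in Hw. destruct (excluded_middle_informative (F j w)); [contradiction | lra]. }
    assert (Hsplit : forall i, prob P (fun w => F i w /\ G w) =
        prob P (fun w => F i w /\ G1 w) + prob P (fun w => F i w /\ G2 w)).
    { intro i. rewrite (prob_split _ (F j)) by (try apply meas_and; auto).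
      f_equal; f_equal; apply pred_ext; intro w; unfold G1, G2; tauto. }
    replace (lsum (fun i => prob P (fun w => F i w /\ G w)) l) with
      (lsum (fun i => prob P (fun w => F i w /\ G1 w)) l +
       lsum (fun i => prob P (fun w => F i w /\ G2 w)) l)
      by (rewrite <- lsum_add; f_equal; apply functional_extensionality; intro i; auto).
    replace (prob P (fun w => F j w /\ G w)) with (prob P G1)
      by (f_equal; apply pred_ext; intro w; unfold G1; tauto).
    rewrite (prob_split G (F j) HG (HF j)). fold G1 G2. nra.
Qed.

Lemma avg_prob_le (F : nat -> Omega -> Prop) k M c : (forall j, meas P (F j)) ->
  (forall w, count (fun j => F j w) (seq 0 k) <= M) ->
  (forall j, (j < k)%nat -> c <= prob P (F j)) ->
  INR k * c <= M.
Proof.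
  intros HF Hcount Hc.
  pose proof (sum_prob_le_of_count_le F (seq 0 k) HF (fun _ => True) M (meas_full _ P)
    (fun w _ => Hcount w)) as Hsum.
  rewrite prob_full, Rmult_1_r in Hsum.
  eapply Rle_trans; [|exact Hsum]. rewrite <- (length_seq k 0) at 1.
  apply lsum_lower. intros j Hj. apply in_seq in Hj.
  replace (fun w => F j w /\ True) with (F j) by (apply pred_ext; tauto).
  apply Hc. lia.
Qed.

End Probability.

Theorem theorem1 :
  forall (n : nat) (x0 : Vec n) (Delta L eps : R),
    (1 <= n)%nat -> 0 < Delta -> 0 < L -> 0 <= eps < L ->
    forall (Omega : Type) (P : ProbSpace Omega) (A : algorithm n Omega) (T : nat),
      exists f : Vec n -> R,
        in_class x0 Delta L f /\
        forall O : Vec n -> Vec n, valid_oracle f O ->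
          meas P (finds_stationary A f O eps T) ->
          prob P (finds_stationary A f O eps T) <= 1 / 2.
Proof.
  intros n x0 Delta L eps Hn HDelta HL Heps Omega P A T.
  destruct n as [|m]; [lia|].
  destruct (hard_family m x0 Delta L eps HDelta HL Heps) as [f [Hclass Hsplit]].
  apply NNPP. intros Hfail.
  assert (Hbad : forall j, exists O, valid_oracle (f j) O /\
      meas P (finds_stationary A (f j) O eps T) /\ 1 / 2 < prob P (finds_stationary A (f j) O eps T)).
  { intro j. apply NNPP. intro Hj. apply Hfail. exists (f j). split; [apply Hclass|].
    intros O HO Hmeas. apply Rnot_lt_le. intro Hprob. apply Hj. eauto. }
  destruct (choice _ Hbad) as [O HO].
  assert (Hcount : forall w,
      count (fun j => finds_stationary A (f j) (O j) eps T w) (seq 0 (2 ^ S T)) <= 2 ^ T - 1).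
  { intro w. eapply Rle_trans; [|apply (count_succeeds_le _ f O eps
      (Hsplit O (fun j => proj1 (HO j))) T (A w) (fun _ => True)), seq_NoDup].
    apply count_mono. intros j Hj. split; [exact I | exact Hj]. }
  pose proof (avg_prob_le Omega P _ _ _ (1 / 2) (fun j => proj1 (proj2 (HO j))) Hcount
    (fun j _ => Rlt_le _ _ (proj2 (proj2 (HO j))))) as Havg.
  rewrite pow_INR in Havg. replace (INR 2) with 2 in Havg by (simpl; ring). simpl in Havg. lra.
Qed.
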